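(* Let $G$ be a finite simple graph without isolated vertices, with vertices $v_1,\dots,v_n$, and let $f_j=\mathrm{dp}(v_j)$ for $1\le j\le n$ (so $(f_1,\dots,f_n)$ is, up to ordering, the degree polynomial sequence of $G$). Then: (a) $\sum_{j=1}^{n} sc(f_j)$ is even; (b) for every vertex $v$ of $G$ and every term $kx^{i}$ of $\mathrm{dp}(v)$ with $k\neq 0$, there are at least $k$ distinct vertices $w_1,\dots,w_k$ of $G$, all distinct from $v$, such that $sc(\mathrm{dp}(w_1))=\dots=sc(\mathrm{dp}(w_k))=i$; (c) both $\sum_{j:\ sc(f_j)\text{ odd}} sec(f_j)$ and $\sum_{j:\ sc(f_j)\text{ even}} sec(f_j)$ are even integers.
   Context: For a vertex $v$ of a simple graph $G$, the degree polynomial $\mathrm{dp}(v)\in\mathbb{Z}[x]$ is the polynomial in which the coefficient of $x^{i}$ is the number of neighbors of $v$ that have degree $i$ in $G$ (so $\mathrm{dp}(v)=0$ if $v$ is isolated). For a polynomial $f=\sum_i a_i x^i$ with nonnegative integer coefficients, $sc(f)$ denotes the sum of all its coefficients (with $sc(0)=0$), $sec(f)$ the sum of the coefficients $a_i$ with $i$ even, and $soc(f)$ the sum of the coefficients $a_i$ with $i$ odd. The degree polynomial sequence of $G$ is the list of degree polynomials of its vertices arranged in non-increasing order with respect to a fixed total order on polynomials. *)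

From HB Require Import structures.
From mathcomp Require Import all_boot all_order all_algebra.
Set Implicit Arguments. Unset Strict Implicit. Unset Printing Implicit Defensive.
Import Order.TTheory GRing.Theory Num.Theory.
Local Open Scope ring_scope.

Definition simple_graph (T : finType) (e : rel T) : Prop :=
  symmetric e /\ irreflexive e.

Definition deg (T : finType) (e : rel T) (v : T) : nat := #|[set w | e v w]|.

Definition dp (T : finType) (e : rel T) (v : T) : {poly int} :=
  \sum_(w in T | e v w) 'X^(deg e w).

Definition sc (f : {poly int}) : int := \sum_(i < size f) f`_i.
Definition sec (f : {poly int}) : int := \sum_(i < size f | ~~ odd i) f`_i.
Definition soc (f : {poly int}) : int := \sum_(i < size f | odd i) f`_i.

From HB Require Import structures.
From mathcomp Require Import all_boot all_order all_algebra.
Import Order.TTheory GRing.Theory Num.Theory.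
Local Open Scope ring_scope.

(* Everything reduces to degrees: sc (dp v) is deg v, the coefficient of x^i
   in dp v counts the neighbours of v of degree i, and sec (dp v) counts its
   neighbours of even degree.  Part (a) is then the handshake lemma.  In (c),
   the sum over even-degree vertices counts the ordered edges inside the set of
   even-degree vertices, which is even; the sum over odd-degree vertices counts
   the edges leaving the set of odd-degree vertices, whose parity is that of
   the degree sum over this set, itself even by the handshake lemma. *)

Lemma dvd2z_nat (n : nat) : (2 %| (n%:R : int))%Z = (2 %| n)%N.
Proof. by rewrite natz. Qed.

Lemma sum_sym_even (I : finType) (F : I -> I -> nat) :
    (forall i j, F i j = F j i) -> (forall i, F i i = 0%N) ->
  (2 %| \sum_i \sum_j F i j)%N.
Proof.
(* Split each F i j by comparing ranks; the two halves are exchanged by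
   transposing the double sum. *)
move=> Fsym F0; pose r (i : I) := nat_of_ord (enum_rank i).
pose below (i j : I) := if (r j < r i)%N then F i j else 0%N.
have split_F i j : F i j = (below i j + below j i)%N.
  rewrite /below [F j i]Fsym; case: ltngtP; rewrite ?addn0 // /r.
  by move=> /ord_inj/enum_rank_inj ->; rewrite F0.
under eq_bigr do under eq_bigr do rewrite split_F.
under eq_bigr do rewrite big_split.
by rewrite big_split /= [X in (_ + X)%N]exchange_big addnn dvdn2 odd_double.
Qed.

Section Handshake.
Variables (T : finType) (e : rel T).
Hypothesis e_simple : simple_graph e.

Lemma handshake_in (P : pred T) :
  (2 %| \sum_(v | P v) #|[set w | e v w & P w]|)%N.
Proof.
have [e_sym e_irr] := e_simple.
have -> : (\sum_(v | P v) #|[set w | e v w & P w]|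
           = \sum_v \sum_w (P v && e v w && P w : nat))%N.
  rewrite big_mkcond; apply: eq_bigr => v _; rewrite -sum1dep_card big_mkcond.
  by case: (P v) => /=; [apply: eq_bigr => w _; case: (_ && _) | rewrite big1].
apply: sum_sym_even => [v w | v]; last by rewrite e_irr andbF.
by rewrite e_sym andbC andbA; case: (P v); case: (P w); case: (e w v).
Qed.

Lemma handshake : (2 %| \sum_v deg e v)%N.
Proof.
have := handshake_in predT; rewrite (eq_bigl predT) //.
by under eq_bigr do under eq_finset do rewrite andbT.
Qed.

Lemma deg_split (Q : pred T) v :
  deg e v = (#|[set w | e v w & Q w]| + #|[set w | e v w & ~~ Q w]|)%N.
Proof.
rewrite /deg -(cardsID [set w | Q w]); congr (_ + _)%N; apply: eq_card => w.
  by rewrite !inE.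
by rewrite !inE andbC.
Qed.

Lemma sum_deg_cut_even (P : pred T) :
  (2 %| \sum_(v | P v) deg e v)%N =
  (2 %| \sum_(v | P v) #|[set w | e v w & ~~ P w]|)%N.
Proof.
under eq_bigr do rewrite (deg_split P).
by rewrite big_split dvdn_addr ?handshake_in.
Qed.

Lemma sum_odd_deg_even : (2 %| \sum_(v | odd (deg e v)) deg e v)%N.
Proof.
have := handshake; rewrite (bigID (fun v => odd (deg e v))) /= dvdn_addl //.
by apply: dvdn_sum => v; rewrite dvdn2.
Qed.

End Handshake.

Lemma sum_coef_widen (R : nzSemiRingType) (p : {poly R}) (P : pred nat) n :
  (size p <= n)%N -> \sum_(i < size p | P i) p`_i = \sum_(i < n | P i) p`_i.
Proof.
move=> le_p_n; rewrite (big_ord_widen_cond _ P (fun i => p`_i) le_p_n).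
rewrite [LHS]big_mkcond [RHS]big_mkcond; apply: eq_bigr => i _.
by case: (P i); case: ltnP => //= /(nth_default 0) ->.
Qed.

Lemma sum_coef_sum_Xn (R : nzSemiRingType) (I : finType) (Q : pred I)
    (d : I -> nat) (P : pred nat) n :
    (forall w, Q w -> d w < n)%N ->
  \sum_(i < n | P i) (\sum_(w | Q w) 'X^(d w) : {poly R})`_i
    = #|[set w | Q w & P (d w)]|%:R.
Proof.
move=> lt_d_n; rewrite -sum1dep_card natr_sum big_mkcondr /=.
under eq_bigr do rewrite coef_sum.
rewrite exchange_big /=; apply: eq_bigr => w Qw.
rewrite big_mkcond (bigD1 (Ordinal (lt_d_n w Qw))) //= coefXn eqxx big1 ?addr0.
  by case: (P _).
move=> i neq_i_w; rewrite coefXn; case: eqP => [eq_i_w | _]; last by rewrite if_same.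
by case/eqP: neq_i_w; apply: val_inj.
Qed.

Section DegreePolynomial.
Variables (T : finType) (e : rel T).

Lemma coef_dp v i : (dp e v)`_i = #|[set w | e v w & deg e w == i]|%:R.
Proof.
rewrite /dp coef_sum -sum1dep_card natr_sum big_mkcond [RHS]big_mkcond /=.
by apply: eq_bigr => w _; rewrite coefXn eq_sym; case: (e v w); case: (_ == _).
Qed.

Lemma sum_coef_dp (P : pred nat) v :
  \sum_(i < size (dp e v) | P i) (dp e v)`_i
    = #|[set w | e v w & P (deg e w)]|%:R.
Proof.
rewrite (@sum_coef_widen _ _ P (maxn (size (dp e v)) #|T|.+1) (leq_maxl _ _)).
rewrite sum_coef_sum_Xn; first by congr (#|_|%:R); apply/setP => w; rewrite !inE.
by move=> w _; rewrite leq_max ltnS max_card orbT.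
Qed.

Lemma sc_dp v : sc (dp e v) = (deg e v)%:R.
Proof. by rewrite /sc (sum_coef_dp xpredT) /deg; under eq_finset do rewrite andbT. Qed.

Lemma sec_dp v : sec (dp e v) = #|[set w | e v w & ~~ odd (deg e w)]|%:R.
Proof. exact: (sum_coef_dp (fun i => ~~ odd i)). Qed.

End DegreePolynomial.

Theorem theorem4p12 (T : finType) (e : rel T) :
  simple_graph e ->
  (forall v : T, exists w : T, e v w) ->
  [/\ (2 %| \sum_(v : T) sc (dp e v))%Z,
      (forall (v : T) (i : nat), (dp e v)`_i != 0 ->
         exists W : {set T}, [/\ v \notin W, (dp e v)`_i = (#|W|)%:Z &
                                 forall w, w \in W -> sc (dp e w) = i%:Z])
    & (2 %| \sum_(v : T | ~~ (2 %| sc (dp e v))%Z) sec (dp e v))%Z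
      /\ (2 %| \sum_(v : T | (2 %| sc (dp e v))%Z) sec (dp e v))%Z].
Proof.
(* Isolated vertices have dp = 0 and do not affect any of the claims. *)
move=> e_simple _; split.
- under eq_bigr do rewrite sc_dp.
  by rewrite -natr_sum dvd2z_nat handshake.
- move=> v i _; exists [set w | e v w & deg e w == i]; split.
  + by rewrite inE e_simple.2.
  + by rewrite coef_dp natz.
  + by move=> w; rewrite inE sc_dp natz => /andP[_ /eqP ->].
- split.
  + under eq_bigl do rewrite sc_dp dvd2z_nat dvdn2 negbK.
    under eq_bigr do rewrite sec_dp.
    by rewrite -natr_sum dvd2z_nat -sum_deg_cut_even // sum_odd_deg_even.
  + under eq_bigl do rewrite sc_dp dvd2z_nat dvdn2.
    under eq_bigr do rewrite sec_dp.
    rewrite -natr_sum dvd2z_nat.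
    exact: (@handshake_in _ _ e_simple (fun v => ~~ odd (deg e v))).
Qed.
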